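(* Let $M>0$, $\mu>0$, $m\in\mathbb{Z}\setminus\{0\}$, $n\in\{0,1,2,\dots\}$ and $l\in\{|m|,|m|+1,\dots\}$, and put $\alpha=\frac{m}{\mu M}$, $\beta=6-\frac{l(l+1)}{\mu^2M^2}$. Suppose $4<\alpha^2<6$ and $\frac{4}{100}<\beta<\frac{165}{100}$. For $a\in(0,M)$ define the polynomial $$p_a(w)=w^4+\frac{\frac{ma}{M}-i(2n+1)\sqrt{1-\frac{a^2}{M^2}}}{\mu M}\,w(w^2-1)+\left[2-\frac{l(l+1)}{\mu^2M^2}\right]w^2+3+2\sqrt{1-\frac{a^2}{M^2}},\quad w\in\mathbb{C}.$$ Then there exists $a_0\in(0,M)$ such that for every $a\in(a_0,M)$ (i.e. for $a$ sufficiently close to $M$), $p_a$ has a root in $\{w\in\mathbb{C}:|w|<1,\ \mathrm{Im}(w)<0\}$. *)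

From Stdlib Require Import Reals.
From Coquelicot Require Import Coquelicot.
Open Scope R_scope.

Definition p_poly (M mu : R) (m : Z) (n l : nat) (a : R) (w : C) : C :=
  let s := sqrt (1 - a ^ 2 / M ^ 2) in
  let coef : C := (Cdiv (RtoC (IZR m * a / M) - Ci * RtoC (2 * INR n + 1) * RtoC s)
                        (RtoC (mu * M)))%C in
  (w ^ 4 + coef * w * (w ^ 2 - 1)
   + RtoC (2 - INR l * (INR l + 1) / (mu ^ 2 * M ^ 2)) * w ^ 2
   + RtoC (3 + 2 * s))%C.

(* At a = M the polynomial becomes the real quartic
   Q(w) = w^4 + α w (w^2 - 1) + (β - 4) w^2 + 3.  It is positive on (-1, 1), and it splits over
   R into two monic quadratics, one of which has constant term c in [1/2, 1) (found by the
   intermediate value theorem).  That factor has no root in (-1, 1), so its roots are non-real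
   conjugates of modulus sqrt c < 1; let z0 be the one with Im z0 < 0.  For a close to M the
   coefficients of p_a differ from those of Q by O(sqrt (1 - a^2/M^2)), so |p_a(z0)| < ρ^4,
   where ρ is the distance from z0 to the boundary of the lower half disk.  Since p_a is a
   product of four linear factors over C, one of its roots lies within ρ of z0. *)

From Stdlib Require Import Reals ZArith List Lra Psatz.
From Coquelicot Require Import Coquelicot.
From mathcomp Require Rstruct complex all_boot all_algebra.
Import ListNotations.
Open Scope R_scope.

(* [eval_monic [a_0; ...; a_(k-1)] w = a_0 + a_1 w + ... + a_(k-1) w^(k-1) + w^k]. *)
Fixpoint eval_monic (cs : list C) (w : C) : C :=
  match cs with
  | [] => 1%C
  | c :: cs' => (c + w * eval_monic cs' w)%C
  end.

Module ComplexClosed.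
Import Rstruct all_boot all_algebra complex.
Import GRing.Theory.
Local Open Scope ring_scope.

Definition to_C (x : R[i]) : C := let: Complex a b := x in (a, b).
Definition of_C (z : C) : R[i] := Complex z.1 z.2.

Lemma to_C_of_C z : to_C (of_C z) = z. Proof. by case: z. Qed.
Lemma to_CD x y : to_C (x + y) = Cplus (to_C x) (to_C y). Proof. by case: x; case: y. Qed.
Lemma to_CM x y : to_C (x * y) = Cmult (to_C x) (to_C y).
Proof. by case: x => a b; case: y. Qed.

Lemma to_C_horner cs x :
  to_C (Poly (rcons (map of_C cs) 1)).[x] = eval_monic cs (to_C x).
Proof.
elim: cs => [|c cs IH] /=; first by rewrite horner_cons horner0 mul0r add0r.
by rewrite horner_cons to_CD to_CM IH to_C_of_C Cplus_comm Cmult_comm.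
Qed.

(* [RtoC R0] rather than [0], which would be read in ring_scope here. *)
Lemma eval_monic_has_root c cs : exists r, eval_monic (c :: cs) r = RtoC R0.
Proof.
pose p : {poly R[i]} := Poly (rcons (map of_C (c :: cs)) 1).
have szp : size p = (size cs).+2.
  by rewrite /p (PolyK (c := 0)) ?last_rcons ?oner_eq0 // size_rcons size_map.
have /closed_rootP [x /rootP px] : size p != 1 by rewrite szp.
by exists (to_C x); rewrite -(to_C_horner (c :: cs)) -/p px.
Qed.

End ComplexClosed.

Lemma eval_monic_remainder c cs r : exists ds, length ds = length cs /\
  forall w, eval_monic (c :: cs) w = ((w - r) * eval_monic ds w + eval_monic (c :: cs) r)%C.
Proof.
  revert c; induction cs as [|c' cs IH]; intro c.
  - exists []; split; [reflexivity|]. intro w; cbn [eval_monic]; ring.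
  - destruct (IH c') as [ds [Hlen Hdiv]].
    exists (eval_monic (c' :: cs) r :: ds); split; [simpl; auto|].
    intro w. change (eval_monic (c :: c' :: cs) w) with (c + w * eval_monic (c' :: cs) w)%C.
    rewrite Hdiv; cbn [eval_monic]; ring.
Qed.

Lemma eval_monic_root_near cs z0 rho : 0 < rho ->
  Cmod (eval_monic cs z0) < rho ^ length cs ->
  exists r, eval_monic cs r = 0%C /\ Cmod (z0 - r) < rho.
Proof.
  intros Hrho. induction (length cs) as [|k IH] eqn:Hk in cs |- *.
  - destruct cs; [|discriminate]. simpl; rewrite Cmod_1; lra.
  - destruct cs as [|c cs]; [discriminate|]. intro Hsmall.
    destruct (ComplexClosed.eval_monic_has_root c cs) as [r Hr].
    destruct (eval_monic_remainder c cs r) as [ds [Hlen Hdiv]].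
    destruct (Rlt_or_le (Cmod (z0 - r)) rho) as [Hnear|Hfar]; [now exists r|].
    assert (Hds : Cmod (eval_monic ds z0) < rho ^ k).
    { rewrite Hdiv, Hr, Cplus_0_r, Cmod_mult in Hsmall. simpl in Hsmall.
      pose proof (Cmod_ge_0 (eval_monic ds z0)). nra. }
    destruct (IH ds) as [r' [Hr' Hnear]]; [simpl in Hk; lia|exact Hds|].
    exists r'; split; [rewrite Hdiv, Hr', Hr, Cmult_0_r, Cplus_0_r; reflexivity|exact Hnear].
Qed.

Lemma lower_half_disk_ball z0 r :
  Cmod (z0 - r) < Rmin (1 - Cmod z0) (- Im z0) -> Cmod r < 1 /\ Im r < 0.
Proof.
  intros Hnear.
  pose proof (Rmin_l (1 - Cmod z0) (- Im z0)). pose proof (Rmin_r (1 - Cmod z0) (- Im z0)).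
  split.
  - pose proof (Cmod_triangle z0 (- (z0 - r))%C) as Htri.
    rewrite Cmod_opp in Htri. replace (z0 + - (z0 - r))%C with r in Htri by ring. lra.
  - pose proof (Rmax_Cmod (z0 - r)%C) as Hmax.
    pose proof (Rmax_r (Rabs (fst (z0 - r)%C)) (Rabs (snd (z0 - r)%C))).
    pose proof (Rle_abs (- snd (z0 - r)%C)) as Habs. rewrite Rabs_Ropp in Habs.
    destruct z0, r; simpl in *. lra.
Qed.

Definition limit_rpoly (A g x : R) : R := x ^ 4 + A * x ^ 3 + g * x ^ 2 - A * x + 3.

Definition limit_poly (A g : R) (w : C) : C :=
  (w ^ 4 + RtoC A * w * (w ^ 2 - 1) + RtoC g * w ^ 2 + RtoC 3)%C.

Lemma limit_poly_RtoC A g x : limit_poly A g (RtoC x) = RtoC (limit_rpoly A g x).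
Proof.
  unfold limit_poly, limit_rpoly.
  apply injective_projections; simpl; ring.
Qed.

Lemma limit_rpoly_pos A g x :
  A ^ 2 < 6 -> 4 / 100 < g + 4 -> -1 < x < 1 -> 0 < limit_rpoly A g x.
Proof.
  intros HA Hg Hx.
  (* [245/100 > sqrt 6 > |A|]; the certificate is [(y - 945/1000)^2 (y^2 + 434/100 y + 3) >= 0]. *)
  assert (Hcert : forall y, 0 <= y ->
    0 < (1 - y ^ 2) * (3 - y ^ 2 - 245 / 100 * y) + 4 / 100 * y ^ 2).
  { intros y Hy.
    assert (0 <= (y - 945/1000) ^ 2 * (y ^ 2 + 434/100 * y + 3))
      by (apply Rmult_le_pos; [apply pow2_ge_0|nra]).
    assert (0 <= (y - 945/1000) ^ 2) by apply pow2_ge_0.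
    nra. }
  assert (HA' : Rabs A < 245 / 100).
  { rewrite <- pow2_abs in HA. pose proof (Rabs_pos A). nra. }
  assert (Hy : Rabs x ^ 2 = x ^ 2) by apply pow2_abs.
  assert (HAx : A * x <= 245 / 100 * Rabs x).
  { pose proof (Rle_abs (A * x)) as Habs. rewrite Rabs_mult in Habs.
    pose proof (Rabs_pos x). nra. }
  pose proof (Hcert (Rabs x) (Rabs_pos x)) as Hpos. rewrite Hy in Hpos.
  assert (0 < 1 - x ^ 2) by nra.
  unfold limit_rpoly. nra.
Qed.

(* Eliminating the other coefficients of [limit_poly A g w = (w^2 + b w + c) (w^2 + d w + e)]
   leaves this equation for the constant term [c] of a real quadratic factor. *)
Definition resolvent (A g c : R) : R :=
  (c ^ 2 + 3 - g * c) * (3 - c ^ 2) ^ 2 - A ^ 2 * c ^ 2 * (1 + c) * (3 + c).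

Lemma resolvent_root A g : 4 < A ^ 2 < 6 -> 4 / 100 < g + 4 < 165 / 100 ->
  exists c, 1 / 2 <= c < 1 /\ resolvent A g c = 0.
Proof.
  intros HA Hg.
  destruct (IVT (fun c => - resolvent A g c) (1 / 2) 1) as [c [Hc Hroot]].
  - unfold resolvent. reg.
  - lra.
  - unfold resolvent. nra.
  - unfold resolvent. nra.
  - assert (c <> 1) by (intros ->; unfold resolvent in Hroot; nra).
    exists c; split; lra.
Qed.

Lemma limit_poly_factor A g c : 0 < c < 1 -> resolvent A g c = 0 ->
  let b := - A * c * (1 + c) / (3 - c ^ 2) in
  forall w, limit_poly A g w =
    ((w ^ 2 + RtoC b * w + RtoC c) * (w ^ 2 + RtoC (A - b) * w + RtoC (3 / c)))%C.
Proof.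
  intros Hc Hres b w.
  assert (Hg : g = (c ^ 2 + 3) / c - A ^ 2 * c * (1 + c) * (3 + c) / (3 - c ^ 2) ^ 2).
  { unfold resolvent in Hres. field_simplify_eq; [nra|]. split; nra. }
  subst g. unfold limit_poly, b. destruct w as [x y].
  apply injective_projections; simpl; field; split; nra.
Qed.

Lemma real_quadratic_root_lower_half_disk b c : 0 < c < 1 ->
  (forall x, -1 < x < 1 -> x ^ 2 + b * x + c <> 0) ->
  exists z, (z ^ 2 + RtoC b * z + RtoC c = 0)%C /\ Cmod z < 1 /\ Im z < 0.
Proof.
  intros Hc Hnoroot.
  destruct (Rlt_or_le 0 (c - b ^ 2 / 4)) as [Hdisc|Hdisc].
  - set (v := sqrt (c - b ^ 2 / 4)).
    assert (Hv2 : v * v = c - b ^ 2 / 4) by (apply sqrt_sqrt; lra).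
    assert (Hv : 0 < v) by (apply sqrt_lt_R0; lra).
    exists (- b / 2, - v). split; [|split].
    + apply injective_projections; simpl; nra.
    + pose proof (Cmod2_alt (- b / 2, - v)) as Hmod. simpl in Hmod.
      pose proof (Cmod_ge_0 (- b / 2, - v)). nra.
    + simpl. lra.
  - exfalso.
    set (s := sqrt (b ^ 2 / 4 - c)).
    assert (Hs2 : s * s = b ^ 2 / 4 - c) by (apply sqrt_sqrt; lra).
    assert (Hprod : Rabs (- b / 2 + s) * Rabs (- b / 2 - s) = c).
    { rewrite <- Rabs_mult, Rabs_right; nra. }
    destruct (Rlt_or_le (Rabs (- b / 2 + s)) 1) as [H1|H1].
    + apply (Hnoroot (- b / 2 + s)); [apply Rabs_def2 in H1; lra | nra].
    + destruct (Rlt_or_le (Rabs (- b / 2 - s)) 1) as [H2|H2].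
      * apply (Hnoroot (- b / 2 - s)); [apply Rabs_def2 in H2; lra | nra].
      * nra.
Qed.

Lemma limit_poly_root A g : 4 < A ^ 2 < 6 -> 4 / 100 < g + 4 < 165 / 100 ->
  exists z0, limit_poly A g z0 = 0%C /\ Cmod z0 < 1 /\ Im z0 < 0.
Proof.
  intros HA Hg.
  destruct (resolvent_root A g HA Hg) as [c [Hc Hres]].
  assert (Hc' : 0 < c < 1) by lra.
  pose proof (limit_poly_factor A g c Hc' Hres) as Hfactor. cbv zeta in Hfactor.
  set (b := - A * c * (1 + c) / (3 - c ^ 2)) in Hfactor.
  destruct (real_quadratic_root_lower_half_disk b c Hc') as [z0 [Hz0 Hdisk]].
  - intros x Hx Hroot.
    assert (Hq : RtoC (limit_rpoly A g x) = 0%C).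
    { rewrite <- limit_poly_RtoC, Hfactor.
      replace (RtoC x ^ 2 + RtoC b * RtoC x + RtoC c)%C with (RtoC (x ^ 2 + b * x + c))
        by (apply injective_projections; simpl; ring).
      rewrite Hroot. ring. }
    apply RtoC_inj in Hq.
    pose proof (limit_rpoly_pos A g x (proj2 HA) (proj1 Hg) Hx). lra.
  - exists z0. split; [|exact Hdisk]. rewrite Hfactor, Hz0. ring.
Qed.

Definition extremality_gap (M a : R) : R := sqrt (1 - a ^ 2 / M ^ 2).

Definition p_coef (M mu : R) (m : Z) (n : nat) (a : R) : C :=
  Cdiv (RtoC (IZR m * a / M) - Ci * RtoC (2 * INR n + 1) * RtoC (extremality_gap M a))
    (RtoC (mu * M)).

Lemma p_poly_eq_monic M mu m n l a w :
  p_poly M mu m n l a w =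
  eval_monic [RtoC (3 + 2 * extremality_gap M a); (- p_coef M mu m n a)%C;
              RtoC (2 - INR l * (INR l + 1) / (mu ^ 2 * M ^ 2)); p_coef M mu m n a] w.
Proof. unfold p_poly, p_coef, extremality_gap. cbn [eval_monic]. ring. Qed.

Lemma p_poly_sub_limit M mu m n l a w :
  p_poly M mu m n l a w =
  (limit_poly (IZR m / (mu * M)) (2 - INR l * (INR l + 1) / (mu ^ 2 * M ^ 2)) w
   + (p_coef M mu m n a - RtoC (IZR m / (mu * M))) * (w * (w ^ 2 - 1))
   + RtoC (2 * extremality_gap M a))%C.
Proof.
  unfold p_poly, p_coef, limit_poly, extremality_gap.
  rewrite (RtoC_plus 3), (RtoC_mult 2). ring.
Qed.

Lemma Cmod_le_abs_add x y : Cmod (x, y) <= Rabs x + Rabs y.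
Proof.
  pose proof (Rabs_pos x); pose proof (Rabs_pos y).
  unfold Cmod; cbn [fst snd].
  rewrite <- (sqrt_pow2 (Rabs x + Rabs y)) by lra.
  apply sqrt_le_1_alt.
  rewrite <- (pow2_abs x), <- (pow2_abs y). nra.
Qed.

Lemma p_coef_sub_le M mu m n a : 0 < M -> 0 < mu -> 0 <= a <= M ->
  Cmod (p_coef M mu m n a - RtoC (IZR m / (mu * M)))
  <= (Rabs (IZR m / (mu * M)) + (2 * INR n + 1) / (mu * M)) * extremality_gap M a.
Proof.
  intros HM Hmu Ha.
  set (A := IZR m / (mu * M)). set (s := extremality_gap M a). set (t := a / M).
  assert (HmuM : 0 < mu * M) by nra.
  assert (Hcoef : (p_coef M mu m n a - RtoC A)%C
                  = (A * (t - 1), - ((2 * INR n + 1) / (mu * M) * s))).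
  { unfold p_coef, A, t; fold s.
    apply injective_projections; simpl; field; lra. }
  assert (Hat : a = t * M) by (unfold t; field; lra).
  assert (Ht : 0 <= t <= 1) by (split; nra).
  assert (Hs2 : s * s = 1 - t ^ 2).
  { unfold s, extremality_gap. rewrite sqrt_sqrt; unfold t; [field; lra|].
    replace (a ^ 2 / M ^ 2) with (t ^ 2) by (unfold t; field; lra). nra. }
  assert (Hs : 0 <= s) by apply sqrt_pos.
  (* [1 - t <= (1 - t) (1 + t) = s^2 <= s] *)
  assert (Hts : 1 - t <= s) by nra.
  assert (Hk : 0 <= (2 * INR n + 1) / (mu * M))
    by (apply Rdiv_le_0_compat; [pose proof (pos_INR n)|]; lra).
  rewrite Hcoef. eapply Rle_trans; [apply Cmod_le_abs_add|].
  rewrite Rabs_Ropp, !Rabs_mult, (Rabs_left1 (t - 1)), (Rabs_right s),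
    (Rabs_right ((2 * INR n + 1) / (mu * M))) by lra.
  pose proof (Rabs_pos A). nra.
Qed.

Lemma Cmod_cubic_le w : Cmod w <= 1 -> Cmod (w * (w ^ 2 - 1)) <= 2.
Proof.
  intros Hw. pose proof (Cmod_ge_0 w).
  rewrite Cmod_mult.
  assert (Cmod (w ^ 2 - 1) <= 2).
  { unfold Cminus. eapply Rle_trans; [apply Cmod_triangle|].
    rewrite Cmod_opp, Cmod_1, Cmod_pow. nra. }
  pose proof (Cmod_ge_0 (w ^ 2 - 1)). nra.
Qed.

Lemma p_poly_at_limit_root_le M mu m n l a z0 : 0 < M -> 0 < mu -> 0 <= a <= M ->
  limit_poly (IZR m / (mu * M)) (2 - INR l * (INR l + 1) / (mu ^ 2 * M ^ 2)) z0 = 0%C ->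
  Cmod z0 <= 1 ->
  Cmod (p_poly M mu m n l a z0)
  <= (2 * (Rabs (IZR m / (mu * M)) + (2 * INR n + 1) / (mu * M)) + 2) * extremality_gap M a.
Proof.
  intros HM Hmu Ha Hroot Hz0.
  rewrite p_poly_sub_limit, Hroot, Cplus_0_l.
  eapply Rle_trans; [apply Cmod_triangle|].
  rewrite Cmod_mult, Cmod_R, Rabs_right by (apply Rle_ge, Rmult_le_pos; [lra|apply sqrt_pos]).
  pose proof (p_coef_sub_le M mu m n a HM Hmu Ha).
  pose proof (Cmod_cubic_le z0 Hz0).
  pose proof (Cmod_ge_0 (p_coef M mu m n a - RtoC (IZR m / (mu * M)))).
  pose proof (Cmod_ge_0 (z0 * (z0 ^ 2 - 1))).
  nra.
Qed.

Lemma extremality_gap_small M delta : 0 < M -> 0 < delta ->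
  exists a0, 0 < a0 < M /\ forall a, a0 < a < M -> extremality_gap M a < delta.
Proof.
  intros HM Hdelta.
  set (d := Rmin delta (1 / 2)).
  assert (Hd : 0 < d <= 1 / 2) by (unfold d; split; [apply Rmin_glb_lt|apply Rmin_r]; lra).
  assert (Hd' : d <= delta) by apply Rmin_l.
  set (r := sqrt (1 - d ^ 2)).
  assert (Hr2 : r * r = 1 - d ^ 2) by (apply sqrt_sqrt; nra).
  assert (Hr : 0 < r) by (apply sqrt_lt_R0; nra).
  assert (Hr1 : r < 1) by nra.
  exists (M * r). split; [split; nra|].
  intros a Ha. unfold extremality_gap.
  set (t := a / M).
  assert (Hat : a = t * M) by (unfold t; field; lra).
  replace (a ^ 2 / M ^ 2) with (t ^ 2) by (unfold t; field; lra).
  assert (Ht : r < t < 1) by (split; nra).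
  apply Rlt_le_trans with d; [|lra].
  rewrite <- (sqrt_pow2 d) by lra. apply sqrt_lt_1_alt. split; nra.
Qed.

Theorem mainTheorem5 (M mu : R) (m : Z) (n l : nat)
  (hM : 0 < M) (hmu : 0 < mu) (hm : m <> 0%Z)
  (hl : (Z.to_nat (Z.abs m) <= l)%nat)
  (halpha : 4 < (IZR m / (mu * M)) ^ 2 < 6)
  (hbeta : 4 / 100 < 6 - INR l * (INR l + 1) / (mu ^ 2 * M ^ 2) < 165 / 100) :
  exists a0 : R, 0 < a0 < M /\
    forall a : R, a0 < a < M ->
      exists w : C, p_poly M mu m n l a w = 0%C /\ Cmod w < 1 /\ Im w < 0.
Proof.
  (* only the bounds on α and β are needed, not [hm] and [hl] *)
  set (A := IZR m / (mu * M)) in *.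
  set (g := 2 - INR l * (INR l + 1) / (mu ^ 2 * M ^ 2)).
  destruct (limit_poly_root A g halpha) as [z0 [Hroot [Hz0 Him]]]; [unfold g; lra|].
  set (rho := Rmin (1 - Cmod z0) (- Im z0)).
  assert (Hrho : 0 < rho) by (apply Rmin_glb_lt; lra).
  set (K := 2 * (Rabs A + (2 * INR n + 1) / (mu * M)) + 2).
  assert (HK : 0 < K).
  { assert (0 <= (2 * INR n + 1) / (mu * M))
      by (apply Rdiv_le_0_compat; [pose proof (pos_INR n)|]; nra).
    pose proof (Rabs_pos A). unfold K. lra. }
  destruct (extremality_gap_small M (rho ^ 4 / K)) as [a0 [Ha0 Hgap]];
    [exact hM|apply Rdiv_lt_0_compat; [apply pow_lt|]; assumption|].
  exists a0. split; [exact Ha0|]. intros a Ha.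
  assert (Hsmall : Cmod (p_poly M mu m n l a z0) < rho ^ 4).
  { apply Rle_lt_trans with (K * extremality_gap M a).
    - apply p_poly_at_limit_root_le; [exact hM|exact hmu|split; lra|exact Hroot|lra].
    - pose proof (Hgap a Ha) as Hs.
      apply Rmult_lt_compat_l with (r := K) in Hs; [|exact HK].
      replace (K * (rho ^ 4 / K)) with (rho ^ 4) in Hs by (field; lra). exact Hs. }
  rewrite p_poly_eq_monic in Hsmall.
  destruct (eval_monic_root_near _ z0 rho Hrho Hsmall) as [r [Hr Hnear]].
  exists r. split; [rewrite p_poly_eq_monic; exact Hr|].
  exact (lower_half_disk_ball z0 r Hnear).
Qed.
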